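(* Let $L\ge2$. Let $\mathcal{M}^*=(m_1^*,\dots,m_L^* )$ be a route with $m_1^*=1$ such that, for each $1\le k<L$, there is a unique nearest neighbor with respect to $(m_1^*,\dots,m_k^* )$ and $m_{k+1}^*$ is that nearest neighbor. Then every route $\mathcal{M}'=(1,m_2,\dots,m_L)$ of the same length $L$ satisfies $$R_{\mathrm{DF}}(\mathcal{M}^* )\ge R_{\mathrm{DF}}(\mathcal{M}').$$
   Context: Network: a finite set of nodes $\mathcal{S}=\{1,2,\dots,D\}$, $D\ge 2$. Node $1$ is the source and node $D$ is the destination. Received powers: for distinct nodes $i,t$, the power received at $t$ from $i$ is a positive real number $P_{it}$. All receivers have the same noise power $N>0$. Routes: a route is an ordered tuple of distinct nodes $\mathcal{M}=(m_1,\dots,m_L)$ with $m_1=1$ and $L\ge1$. DF with independent codewords: the reception rate of node $m_t$ ($2\le t\le L$) in route $\mathcal{M}$ is $$R_{m_t}(\mathcal{M})=\tfrac12\log\Big(1+N^{-1}\sum_{i=1}^{t-1}P_{m_i m_t}\Big).$$ The supported DF rate (for $L\ge2$) is $R_{\mathrm{DF}}(\mathcal{M})=\min_{2\le t\le L}R_{m_t}(\mathcal{M})$. Nearest neighbor: node $i\notin\mathcal{M}$ is a nearest neighbor with respect to route $\mathcal{M}$ iff $P_{mi}\ge P_{mj}$ for all $m\in\mathcal{M}$ and all $j\in\mathcal{S}\setminus(\mathcal{M}\cup\{i\})$. *)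

From Stdlib Require Import Reals List Arith.
Import ListNotations.
Open Scope R_scope.

(* Nodes are the natural numbers 1..D; node 1 is the source. *)
Definition in_S (D : nat) (i : nat) : Prop := (1 <= i <= D)%nat.

Definition is_route (D : nat) (M : list nat) : Prop :=
  hd_error M = Some 1%nat /\ NoDup M /\ Forall (in_S D) M.

(* Reception rate of the node at (0-based) position t of route M, i.e. of
   m_{t+1} in the paper's 1-based notation:
   1/2 log(1 + N^{-1} * sum_{i < t} P (m_i) (m_t)). *)
Definition rec_rate (P : nat -> nat -> R) (N : R) (M : list nat) (t : nat) : R :=
  / 2 * ln (1 + / N * fold_right Rplus 0
              (map (fun i => P (nth i M 0%nat) (nth t M 0%nat)) (seq 0 t))).

(* DF rate: minimum of reception rates over positions 1..L-1 (0-based),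
   i.e. over m_2..m_L.  Meaningful for length L >= 2. *)
Definition R_DF (P : nat -> nat -> R) (N : R) (M : list nat) : R :=
  fold_right Rmin (rec_rate P N M 1)
    (map (rec_rate P N M) (seq 1 (length M - 1))).

Definition nearest_neighbor (D : nat) (P : nat -> nat -> R) (M : list nat) (i : nat) : Prop :=
  in_S D i /\ ~ In i M /\
  forall m j, In m M -> in_S D j -> ~ In j M -> j <> i -> P m i >= P m j.

From Stdlib Require Import Reals List Arith Lia Lra.
Import ListNotations.
Open Scope R_scope.

(* Let t be a bottleneck position of the greedy route Mstar, so that
   R_DF(Mstar) is the reception rate of its node x = Mstar_t, whose received power
   is the sum of P s x over the prefix Pre = (Mstar_0, ..., Mstar_(t-1)).  Walk along the
   competing route M' and stop at the first node y = M'_j that is not in Pre;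
   since M' has no repeated nodes and Pre has only t nodes, this happens within the
   first t + 1 positions, and j >= 1 because both routes start at node 1.  All
   transmitters before y lie in Pre, and x is a nearest neighbour of Pre, hence
     rate of y in M' <= capacity(sum_{s in Pre} P s y) <= capacity(sum_{s in Pre} P s x),
   which is the rate of x in Mstar.  As R_DF(M') is at most the rate of y, the
   theorem follows. *)

Definition sumf (f : nat -> R) (l : list nat) : R := fold_right Rplus 0 (map f l).

Lemma sumf_app (f : nat -> R) (l1 l2 : list nat) :
  sumf f (l1 ++ l2) = sumf f l1 + sumf f l2.
Proof. unfold sumf; induction l1; simpl; [lra | rewrite IHl1; lra]. Qed.

Lemma sumf_nonneg (f : nat -> R) (l : list nat) :
  (forall x, In x l -> 0 <= f x) -> 0 <= sumf f l.
Proof.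
  unfold sumf; induction l as [|a l IH]; intros Hf; simpl; [lra |].
  assert (0 <= f a) by (apply Hf; left; reflexivity).
  assert (0 <= fold_right Rplus 0 (map f l)) by (apply IH; intros; apply Hf; right; auto).
  lra.
Qed.

Lemma sumf_le (f g : nat -> R) (l : list nat) :
  (forall x, In x l -> f x <= g x) -> sumf f l <= sumf g l.
Proof.
  unfold sumf; induction l as [|a l IH]; intros Hfg; simpl; [lra |].
  assert (f a <= g a) by (apply Hfg; left; reflexivity).
  assert (fold_right Rplus 0 (map f l) <= fold_right Rplus 0 (map g l))
    by (apply IH; intros; apply Hfg; right; auto).
  lra.
Qed.

Lemma sumf_incl (f : nat -> R) (l1 l2 : list nat) :
  NoDup l1 -> incl l1 l2 -> (forall x, In x l2 -> 0 <= f x) ->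
  sumf f l1 <= sumf f l2.
Proof.
  revert l2; induction l1 as [|a l1 IH]; intros l2 Hnd Hincl Hf.
  - apply sumf_nonneg; exact Hf.
  - destruct (in_split a l2 (Hincl a (or_introl eq_refl))) as [l2a [l2b ->]].
    apply NoDup_cons_iff in Hnd as [Ha Hnd].
    assert (Hrest : sumf f l1 <= sumf f (l2a ++ l2b)).
    { apply IH; auto.
      - intros z Hz. specialize (Hincl z (or_intror Hz)).
        rewrite in_app_iff in *; simpl in Hincl.
        destruct Hincl as [|[<-|]]; tauto.
      - intros z Hz; apply Hf; rewrite in_app_iff in *; simpl; tauto. }
    rewrite sumf_app in *; unfold sumf in *; simpl in *; lra.
Qed.

Definition capacity (N a : R) : R := / 2 * ln (1 + / N * a).

Lemma capacity_le (N a b : R) : 0 < N -> 0 <= a -> a <= b ->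
  capacity N a <= capacity N b.
Proof.
  intros HN Ha Hab; unfold capacity.
  assert (0 < / N) by (apply Rinv_0_lt_compat; exact HN).
  assert (Hpos : 0 < 1 + / N * a) by (pose proof (Rmult_le_pos _ _ (Rlt_le _ _ H) Ha); lra).
  assert (Hle : 1 + / N * a <= 1 + / N * b) by (pose proof (Rmult_le_compat_l _ _ _ (Rlt_le _ _ H) Hab); lra).
  apply Rmult_le_compat_l; [lra |].
  destruct (Rle_lt_or_eq_dec _ _ Hle) as [Hlt | ->]; [| lra].
  left; apply ln_increasing; assumption.
Qed.

Lemma map_nth_seq (g : nat -> R) (M : list nat) (t : nat) : (t <= length M)%nat ->
  map (fun i => g (nth i M 0%nat)) (seq 0 t) = map g (firstn t M).
Proof.
  revert t; induction M as [|a M IH]; intros t Ht.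
  - simpl in Ht; replace t with 0%nat by lia; reflexivity.
  - destruct t as [|t]; [reflexivity |].
    simpl; f_equal; rewrite <- seq_shift, map_map; apply IH; simpl in Ht; lia.
Qed.

Lemma rec_rate_capacity (P : nat -> nat -> R) (N : R) (M : list nat) (t : nat) :
  (t <= length M)%nat ->
  rec_rate P N M t = capacity N (sumf (fun s => P s (nth t M 0%nat)) (firstn t M)).
Proof.
  intros Ht; unfold rec_rate, capacity, sumf.
  rewrite (map_nth_seq (fun s => P s (nth t M 0%nat))); auto.
Qed.

Lemma fold_min_le (a x : R) (l : list R) : In x l -> fold_right Rmin a l <= x.
Proof.
  induction l as [|b l IH]; simpl; intros Hx; [contradiction |].
  destruct Hx as [<- | Hx]; [apply Rmin_l |].
  eapply Rle_trans; [apply Rmin_r | auto].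
Qed.

Lemma fold_min_attained (a : R) (l : list R) :
  fold_right Rmin a l = a \/ In (fold_right Rmin a l) l.
Proof.
  induction l as [|b l IH]; simpl; auto.
  destruct (Rle_dec b (fold_right Rmin a l)).
  - rewrite Rmin_left by auto; right; left; reflexivity.
  - rewrite Rmin_right by lra; destruct IH; auto.
Qed.

Lemma R_DF_le (P : nat -> nat -> R) (N : R) (M : list nat) (t : nat) :
  (1 <= t < length M)%nat -> R_DF P N M <= rec_rate P N M t.
Proof.
  intros Ht; unfold R_DF; apply fold_min_le, in_map, in_seq; lia.
Qed.

Lemma R_DF_attained (P : nat -> nat -> R) (N : R) (M : list nat) :
  (2 <= length M)%nat ->
  exists t, (1 <= t < length M)%nat /\ R_DF P N M = rec_rate P N M t.
Proof.
  intros HM; unfold R_DF.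
  destruct (fold_min_attained (rec_rate P N M 1)
              (map (rec_rate P N M) (seq 1 (length M - 1)))) as [E | E].
  - exists 1%nat; split; [lia | exact E].
  - apply in_map_iff in E as [t [E Ht]]; apply in_seq in Ht.
    exists t; split; [lia | auto].
Qed.

Lemma in_firstn_nth (M : list nat) (j x : nat) : In x (firstn j M) ->
  exists i, (i < j)%nat /\ (i < length M)%nat /\ nth i M 0%nat = x.
Proof.
  intros Hx; destruct (In_nth _ _ 0%nat Hx) as [i [Hi <-]].
  rewrite length_firstn in Hi; rewrite nth_firstn.
  exists i; destruct (Nat.ltb_spec i j); [repeat split; lia | lia].
Qed.

Lemma NoDup_firstn (M : list nat) (j : nat) : NoDup M -> NoDup (firstn j M).
Proof.
  intros H; rewrite <- (firstn_skipn j M) in H; eapply NoDup_app_remove_r; eauto.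
Qed.

Lemma first_outside (M A : list nat) (n : nat) :
  (forall i, (i < n)%nat -> In (nth i M 0%nat) A) \/
  (exists j, (j < n)%nat /\ ~ In (nth j M 0%nat) A /\
     forall i, (i < j)%nat -> In (nth i M 0%nat) A).
Proof.
  induction n as [|n [Hall | Hfirst]].
  - left; intros; lia.
  - destruct (in_dec Nat.eq_dec (nth n M 0%nat) A) as [Hin | Hout].
    + left; intros i Hi; destruct (Nat.eq_dec i n) as [-> | ]; [auto | apply Hall; lia].
    + right; exists n; auto.
  - right; destruct Hfirst as [j [Hj Hrest]]; exists j; split; [lia | exact Hrest].
Qed.

(* Pigeonhole: a duplicate-free route longer than t leaves any set A of t nodes
   within its first t + 1 positions; at the first such position j, the prefix
   of length j lies inside A. *)
Lemma first_escape (M A : list nat) (t : nat) :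
  NoDup M -> length A = t -> (t < length M)%nat ->
  exists j, (j <= t)%nat /\ ~ In (nth j M 0%nat) A /\ incl (firstn j M) A.
Proof.
  intros Hnd HA Ht.
  destruct (first_outside M A (S t)) as [Hall | [j [Hj [Hout Hpre]]]].
  - exfalso.
    assert (Hincl : incl (firstn (S t) M) A).
    { intros x Hx; destruct (in_firstn_nth _ _ _ Hx) as [i [Hi [_ <-]]]; auto. }
    pose proof (NoDup_incl_length (NoDup_firstn M (S t) Hnd) Hincl) as Hlen.
    rewrite length_firstn in Hlen; lia.
  - exists j; repeat split; [lia | exact Hout |].
    intros x Hx; destruct (in_firstn_nth _ _ _ Hx) as [i [Hi [_ <-]]]; auto.
Qed.

Lemma capacity_dominated (P : nat -> nat -> R) (N : R) (Q A : list nat) (x y : nat) :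
  0 < N -> NoDup Q -> incl Q A ->
  (forall s, In s A -> 0 <= P s y) ->
  (forall s, In s A -> P s y <= P s x) ->
  capacity N (sumf (fun s => P s y) Q) <= capacity N (sumf (fun s => P s x) A).
Proof.
  intros HN HQ Hincl Hpos Hdom.
  apply capacity_le; [exact HN | |].
  - apply sumf_nonneg; intros s Hs; apply Hpos, Hincl, Hs.
  - eapply Rle_trans; [apply sumf_incl; eauto | apply sumf_le; exact Hdom].
Qed.

Theorem lemma3 (D : nat) (P : nat -> nat -> R) (N : R) (L : nat)
  (Mstar M' : list nat) :
  (2 <= D)%nat ->
  (forall i t, in_S D i -> in_S D t -> i <> t -> 0 < P i t) ->
  0 < N ->
  (2 <= L)%nat ->
  is_route D Mstar -> length Mstar = L ->
  (forall k, (1 <= k < L)%nat ->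
     nearest_neighbor D P (firstn k Mstar) (nth k Mstar 0%nat) /\
     (forall i, nearest_neighbor D P (firstn k Mstar) i -> i = nth k Mstar 0%nat)) ->
  is_route D M' -> length M' = L ->
  R_DF P N Mstar >= R_DF P N M'.
Proof.
  intros _ HP HN HL [Hs0 [_ Hsin]] Hsl HNN [H'0 [H'nd H'in]] H'l.
  destruct (R_DF_attained P N Mstar ltac:(lia)) as [t [Ht ->]].
  set (Pre := firstn t Mstar); set (x := nth t Mstar 0%nat).
  destruct (first_escape M' Pre t H'nd ltac:(unfold Pre; rewrite length_firstn; lia) ltac:(lia))
    as [j [Hjt [Hy Hpre]]].
  set (y := nth j M' 0%nat) in Hy.
  (* Both routes start at node 1, which lies in Pre, so y is not the source. *)
  assert (Hj : j <> 0%nat).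
  { intros ->; apply Hy; destruct M', Mstar; try discriminate.
    inversion H'0; inversion Hs0; subst; unfold Pre; destruct t; [lia | left; reflexivity]. }
  assert (HyS : in_S D y) by (rewrite Forall_forall in H'in; apply H'in, nth_In; lia).
  assert (HPre : forall s, In s Pre -> in_S D s).
  { intros s Hs; rewrite Forall_forall in Hsin; apply Hsin.
    rewrite <- (firstn_skipn t Mstar); apply in_or_app; left; exact Hs. }
  apply Rle_ge; eapply Rle_trans; [apply (R_DF_le P N M' j); lia |].
  rewrite !rec_rate_capacity by lia.
  apply capacity_dominated; [exact HN | apply NoDup_firstn, H'nd | exact Hpre | |].
  - intros s Hs; left; apply HP; [apply HPre, Hs | exact HyS | intros ->; contradiction].
  - intros s Hs; destruct (Nat.eq_dec y x) as [Hyx | Hyx]; [unfold y, x in Hyx; rewrite Hyx; lra |].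
    destruct (HNN t ltac:(lia)) as [[_ [_ Hnear]] _].
    apply Rge_le, Hnear; [exact Hs | exact HyS | exact Hy | exact Hyx].
Qed.
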